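(* Let $n\geq3$, write $\mathbb{R}^{n+1}\equiv\mathbb{C}\times\mathbb{C}\times\mathbb{R}^{n-3}$ with points $(z_1,z_2,x)$, and let $m\geq1$. Let $\Gamma_m\subset O(n+1)$ be the group generated by $G_m:=\{\mathrm{e}^{2\pi\mathrm{i}j/m}:j=0,\ldots,m-1\}$, acting by $\mathrm{e}^{2\pi\mathrm{i}j/m}(z_1,z_2,x)=(\mathrm{e}^{2\pi\mathrm{i}j/m}z_1,\mathrm{e}^{2\pi\mathrm{i}j/m}z_2,x)$, together with $\tau(z_1,z_2,x)=(-\bar z_2,\bar z_1,x)$, and let $\phi_m:\Gamma_m\to\{1,-1\}$ be the homomorphism with $\phi_m(\mathrm{e}^{2\pi\mathrm{i}j/m})=1$ and $\phi_m(\tau)=-1$. Write $\Gamma_m=\{g_1,\ldots,g_m,\tau g_1,\ldots,\tau g_m\}$ with $g_j=\mathrm{e}^{2\pi\mathrm{i}(j-1)/m}$ (so $\phi_m(g_j)=1$, $g_1=1$). Let $p=(1,0,0)\in\mathbb{S}^n$, $p_j:=g_jp$, $q_j:=\tau p_j$, and $$\mu_p:=\sum_{1\leq i\neq j\leq m}(1-\cos\mathrm{d}_g(p_i,p_j))^{\frac{2-n}{2}},\qquad \widehat{\mu}_p:=\sum_{1\leq i,j\leq m}(1-\cos\mathrm{d}_g(p_i,q_j))^{\frac{2-n}{2}}.$$ Then $\mu_p-\widehat\mu_p>0$ if and only if $m\geq m_n$, where $m_n:=9$ if $n=3$, $m_n:=7$ if $n=4$, $m_n:=6$ if $n\in\{5,6\}$,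 and $m_n:=5$ if $n\geq7$.
   Context: $\mathbb{S}^n$ is the round unit sphere in $\mathbb{R}^{n+1}$ and $\mathrm{d}_g(p,p')=\arccos\langle p,p'\rangle$ is the geodesic distance. *)

From Stdlib Require Import Reals.
Open Scope R_scope.

(* A point of R^{n+1} is a function nat -> R; only coordinates 0..n matter.
   Identification R^{n+1} = C x C x R^{n-3}:
     coord 0 = Re z1, coord 1 = Im z1, coord 2 = Re z2, coord 3 = Im z2,
     coords 4..n = x. *)
Definition pt := nat -> R.

(* Euclidean inner product on R^{n+1} (sum_f_R0 f n = f 0 + ... + f n). *)
Definition inner (n : nat) (u v : pt) : R := sum_f_R0 (fun k => u k * v k) n.

Definition dg (n : nat) (u v : pt) : R := acos (inner n u v).

Definition rot (theta : R) (u : pt) : pt := fun k =>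
  match k with
  | 0%nat => cos theta * u 0%nat - sin theta * u 1%nat
  | 1%nat => sin theta * u 0%nat + cos theta * u 1%nat
  | 2%nat => cos theta * u 2%nat - sin theta * u 3%nat
  | 3%nat => sin theta * u 2%nat + cos theta * u 3%nat
  | _ => u k
  end.

Definition tau (u : pt) : pt := fun k =>
  match k with
  | 0%nat => - u 2%nat
  | 1%nat => u 3%nat
  | 2%nat => u 0%nat
  | 3%nat => - u 1%nat
  | _ => u k
  end.

Definition p0 : pt := fun k => match k with 0%nat => 1 | _ => 0 end.

(* g_{j+1} = e^{2 pi i j / m}, j = 0..m-1 (0-based index) *)
Definition g (m j : nat) : pt -> pt := rot (2 * PI * INR j / INR m).

Definition pj (m j : nat) : pt := g m j p0.
Definition qj (m j : nat) : pt := tau (pj m j).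

Definition expo (n : nat) : R := (2 - INR n) / 2.

Definition mu_p (n m : nat) : R :=
  sum_f_R0 (fun i => sum_f_R0 (fun j =>
    if Nat.eqb i j then 0
    else Rpower (1 - cos (dg n (pj m i) (pj m j))) (expo n)) (m - 1)) (m - 1).

Definition muhat_p (n m : nat) : R :=
  sum_f_R0 (fun i => sum_f_R0 (fun j =>
    Rpower (1 - cos (dg n (pj m i) (qj m j))) (expo n)) (m - 1)) (m - 1).

Definition m_n (n : nat) : nat :=
  match n with
  | 3%nat => 9%nat
  | 4%nat => 7%nat
  | 5%nat | 6%nat => 6%nat
  | _ => 5%nat
  end.

(* The points [p_j] are the [m]-th roots of unity in the first complex factor and
   every [q_j] is orthogonal to every [p_i], so each term of [muhat_p] is [1] and
   [muhat_p = m^2].  Since [1 - cos (2 pi d / m) = 2 sin (pi d / m) ^ 2], every row of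
   [mu_p] is the same circulant sum, so [mu_p = m * S] with
   [S = sum_(d=1)^(m-1) (sqrt 2 sin (pi d / m)) ^ (2 - n)], and the claim is [S > m]
   iff [m >= m_n].  For [m <= 4] every term is at most [1].  For large [m] the terms
   [d = 1, 2, m - 2, m - 1], bounded below through [sin x < x], make [S] exceed [m]
   (for [m >= 10] in general, for [m >= 9] once [n >= 4]).  The cases
   [5 <= m <= 9] are settled by rigorous decimal enclosures of the finitely many
   sines involved, the exponent entering only through monotonicity of powers. *)

From Stdlib Require Import Reals Lra Lia.
Open Scope R_scope.

Fixpoint sum_range (f : nat -> R) (a l : nat) : R :=
  match l with
  | O => 0
  | S l => sum_range f a l + f (a + l)%nat
  end.

Lemma sum_f_R0_sum_range f N : sum_f_R0 f N = sum_range f 0 (S N).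
Proof. induction N as [|N IH]; simpl; [ring | now rewrite IH]. Qed.

Lemma sum_range_add f a l1 l2 :
  sum_range f a (l1 + l2) = sum_range f a l1 + sum_range f (a + l1) l2.
Proof.
  induction l2 as [|l2 IH]; simpl.
  - rewrite Nat.add_0_r; ring.
  - rewrite Nat.add_succ_r; simpl; rewrite IH, Nat.add_assoc; ring.
Qed.

Lemma sum_range_ext f h a l :
  (forall k, (a <= k < a + l)%nat -> f k = h k) -> sum_range f a l = sum_range h a l.
Proof.
  induction l as [|l IH]; intros Hfh; simpl; [reflexivity|].
  rewrite IH by (intros; apply Hfh; lia).
  rewrite Hfh by lia; reflexivity.
Qed.

Lemma sum_range_shift f a c l :
  sum_range (fun k => f (k + c)%nat) a l = sum_range f (a + c) l.
Proof.
  induction l as [|l IH]; simpl; [reflexivity|].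
  rewrite IH; do 2 f_equal; lia.
Qed.

Lemma sum_range_peel f a l :
  sum_range f a (S (S l)) = f a + sum_range f (S a) l + f (a + S l)%nat.
Proof.
  replace (S (S l)) with (1 + S l)%nat by lia.
  rewrite sum_range_add; simpl; rewrite Nat.add_0_r.
  replace (a + 1 + l)%nat with (a + S l)%nat by lia.
  replace (a + 1)%nat with (S a) by lia; ring.
Qed.

Lemma sum_range_lower_bound f a l c :
  (forall k, (a <= k < a + l)%nat -> c <= f k) -> INR l * c <= sum_range f a l.
Proof.
  induction l as [|l IH]; intros Hf; simpl sum_range; [simpl; lra|].
  rewrite S_INR.
  assert (INR l * c <= sum_range f a l) by (apply IH; intros; apply Hf; lia).
  assert (c <= f (a + l)%nat) by (apply Hf; lia).
  lra.
Qed.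

Lemma sum_range_upper_bound f a l c :
  (forall k, (a <= k < a + l)%nat -> f k <= c) -> sum_range f a l <= INR l * c.
Proof.
  induction l as [|l IH]; intros Hf; simpl sum_range; [simpl; lra|].
  rewrite S_INR.
  assert (sum_range f a l <= INR l * c) by (apply IH; intros; apply Hf; lia).
  assert (f (a + l)%nat <= c) by (apply Hf; lia).
  lra.
Qed.

Lemma sum_circulant_row (T F : nat -> R) (m i : nat) :
  (i < m)%nat -> T i = 0 ->
  (forall j, (j < i)%nat -> T j = F (m + j - i)%nat) ->
  (forall j, (i < j < m)%nat -> T j = F (j - i)%nat) ->
  sum_f_R0 T (m - 1) = sum_range F 1 (m - 1).
Proof.
  intros Him Hi Hlow Hhigh.
  rewrite sum_f_R0_sum_range.
  replace (S (m - 1)) with (i + (1 + (m - 1 - i)))%nat by lia.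
  rewrite !sum_range_add; simpl (sum_range T (0 + i) 1).
  rewrite Nat.add_0_r, Hi.
  replace (sum_range T 0 i) with (sum_range F (m - i) i).
  2:{ replace (m - i)%nat with (0 + (m - i))%nat at 1 by lia.
      rewrite <- sum_range_shift; apply sum_range_ext; intros j Hj.
      rewrite Hlow by lia; f_equal; lia. }
  replace (0 + i + 1)%nat with (1 + i)%nat by lia.
  replace (sum_range T (1 + i) (m - 1 - i)) with (sum_range F 1 (m - 1 - i)).
  2:{ rewrite <- sum_range_shift; apply sum_range_ext; intros j Hj.
      rewrite Hhigh by lia; f_equal; lia. }
  replace (m - 1)%nat with ((m - 1 - i) + i)%nat at 2 by lia.
  rewrite sum_range_add; replace (1 + (m - 1 - i))%nat with (m - i)%nat by lia.
  ring.
Qed.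

(** * Reduction to a power sum *)

Definition theta (m k : nat) : R := 2 * PI * INR k / INR m.

Lemma theta_add m a b : theta m (a + b) = theta m a + theta m b.
Proof. unfold theta; rewrite plus_INR; unfold Rdiv; ring. Qed.

Lemma theta_full m : m <> 0%nat -> theta m m = 2 * PI.
Proof. intros Hm; unfold theta; field; apply not_0_INR, Hm. Qed.

Lemma cos_theta_sub_lt m i j : (j < i <= m)%nat ->
  cos (theta m i - theta m j) = cos (theta m (m + j - i)).
Proof.
  intros Hji.
  assert (E : theta m (m + j - i) = 2 * PI - (theta m i - theta m j)).
  { rewrite <- (theta_full m) by lia.
    enough (theta m (m + j - i) + theta m i = theta m m + theta m j) by lra.
    rewrite <- !theta_add; f_equal; lia. }
  rewrite E, (cos_minus (2 * PI)), cos_2PI, sin_2PI; ring.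
Qed.

Lemma cos_theta_sub_gt m i j : (i < j)%nat ->
  cos (theta m i - theta m j) = cos (theta m (j - i)).
Proof.
  intros Hij; rewrite <- cos_neg; f_equal.
  enough (theta m (j - i) + theta m i = theta m j) by lra.
  rewrite <- theta_add; f_equal; lia.
Qed.

Lemma inner_planar n (u v : pt) : (1 <= n)%nat ->
  (forall k, (2 <= k)%nat -> u k = 0) ->
  inner n u v = u 0%nat * v 0%nat + u 1%nat * v 1%nat.
Proof.
  intros Hn Hu; induction Hn as [|n Hn IH]; unfold inner in *; simpl; [ring|].
  rewrite IH, (Hu (S n)) by lia; ring.
Qed.

Lemma pj_planar m j k : (2 <= k)%nat -> pj m j k = 0.
Proof.
  intros Hk; destruct k as [|[|[|[|k]]]]; try lia; unfold pj, g, rot, p0; ring.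
Qed.

Lemma inner_pj_pj n m i j : (1 <= n)%nat ->
  inner n (pj m i) (pj m j) = cos (theta m i - theta m j).
Proof.
  intros Hn; rewrite inner_planar by auto using pj_planar.
  unfold pj, g, rot, p0, theta; rewrite cos_minus; ring.
Qed.

Lemma inner_pj_qj n m i j : (1 <= n)%nat -> inner n (pj m i) (qj m j) = 0.
Proof.
  intros Hn; rewrite inner_planar by auto using pj_planar.
  unfold qj, tau, pj, g, rot, p0; ring.
Qed.

Lemma muhat_p_eq n m : (1 <= n)%nat -> (1 <= m)%nat -> muhat_p n m = INR m * INR m.
Proof.
  intros Hn Hm; unfold muhat_p.
  rewrite (sum_eq _ (fun _ => sum_f_R0 (fun _ => 1) (m - 1))).
  - rewrite !sum_cte; replace (S (m - 1)) with m by lia; ring.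
  - intros i _; apply sum_eq; intros j _.
    unfold dg; rewrite inner_pj_qj, cos_acos by (auto || lra).
    unfold Rpower; rewrite Rminus_0_r, ln_1, Rmult_0_r; apply exp_0.
Qed.

(* [inv_sqrt_vers m d = (1 - cos (theta m d)) ^ (-1/2)] *)
Definition inv_sqrt_vers (m d : nat) : R := / (sqrt 2 * sin (PI * INR d / INR m)).

Definition vers_sum (N m : nat) : R := sum_range (fun d => inv_sqrt_vers m d ^ N) 1 (m - 1).

Lemma sin_pi_frac_pos m d : (1 <= d < m)%nat -> 0 < sin (PI * INR d / INR m).
Proof.
  intros Hdm; pose proof PI_RGT_0.
  assert (0 < INR d < INR m) by (split; [apply lt_0_INR | apply lt_INR]; lia).
  apply sin_gt_0.
  - apply Rdiv_lt_0_compat; [apply Rmult_lt_0_compat|]; lra.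
  - apply Rmult_lt_reg_r with (INR m); [lra|].
    unfold Rdiv; rewrite Rmult_assoc, Rinv_l by lra; nra.
Qed.

Lemma inv_sqrt_vers_pos m d : (1 <= d < m)%nat -> 0 < inv_sqrt_vers m d.
Proof.
  intros Hdm; apply Rinv_0_lt_compat, Rmult_lt_0_compat.
  - apply sqrt_lt_R0; lra.
  - now apply sin_pi_frac_pos.
Qed.

Lemma one_minus_cos_double x : 1 - cos (2 * x) = (sqrt 2 * sin x) ^ 2.
Proof.
  rewrite cos_2a_sin; simpl.
  replace (sqrt 2 * sin x * (sqrt 2 * sin x * 1))
    with (sqrt 2 * sqrt 2 * (sin x * sin x)) by ring.
  rewrite sqrt_sqrt by lra; ring.
Qed.

Lemma Rpower_sqr_expo n a : (2 <= n)%nat -> 0 < a ->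
  Rpower (a ^ 2) (expo n) = (/ a) ^ (n - 2).
Proof.
  intros Hn Ha.
  rewrite <- Rpower_pow, Rpower_mult by exact Ha.
  replace (INR 2 * expo n) with (- INR (n - 2))
    by (unfold expo; rewrite minus_INR by exact Hn; simpl; field).
  rewrite Rpower_Ropp, Rpower_pow, pow_inv by exact Ha; reflexivity.
Qed.

Lemma Rpower_vers_theta n m d : (2 <= n)%nat -> (1 <= d < m)%nat ->
  Rpower (1 - cos (theta m d)) (expo n) = inv_sqrt_vers m d ^ (n - 2).
Proof.
  intros Hn Hdm.
  replace (theta m d) with (2 * (PI * INR d / INR m)) by (unfold theta, Rdiv; ring).
  rewrite one_minus_cos_double, Rpower_sqr_expo; [reflexivity | exact Hn |].
  apply Rmult_lt_0_compat; [apply sqrt_lt_R0; lra | now apply sin_pi_frac_pos].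
Qed.

Lemma mu_p_eq n m : (2 <= n)%nat -> (1 <= m)%nat -> mu_p n m = INR m * vers_sum (n - 2) m.
Proof.
  intros Hn Hm; unfold mu_p.
  assert (Hdist : forall i j,
    Rpower (1 - cos (dg n (pj m i) (pj m j))) (expo n)
    = Rpower (1 - cos (theta m i - theta m j)) (expo n)).
  { intros i j; unfold dg; rewrite inner_pj_pj, cos_acos by (lia || apply COS_bound).
    reflexivity. }
  rewrite (sum_eq _ (fun _ => vers_sum (n - 2) m)).
  - rewrite sum_cte; replace (S (m - 1)) with m by lia; ring.
  - intros i Hi; apply (sum_circulant_row _ _ m i); [lia | now rewrite Nat.eqb_refl | |].
    + intros j Hj; replace (Nat.eqb i j) with false by (symmetry; apply Nat.eqb_neq; lia).
      rewrite Hdist, cos_theta_sub_lt, Rpower_vers_theta by lia; reflexivity.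
    + intros j Hj; replace (Nat.eqb i j) with false by (symmetry; apply Nat.eqb_neq; lia).
      rewrite Hdist, cos_theta_sub_gt, Rpower_vers_theta by lia; reflexivity.
Qed.

(** * Bounds on the power sum *)

Lemma PI_bounds : 3.14159 < PI < 3.1416.
Proof.
  destruct (PI_2_3_7_ineq 2) as [Hlo Hhi].
  unfold tg_alt, PI_2_3_7_tg, Ratan_seq in Hlo, Hhi; simpl in Hlo, Hhi; lra.
Qed.

Lemma sqrt2_bounds : 1.41421 < sqrt 2 < 1.41422.
Proof.
  assert (sqrt 2 * sqrt 2 = 2) by (apply sqrt_sqrt; lra).
  assert (0 < sqrt 2) by (apply sqrt_lt_R0; lra).
  nra.
Qed.

Lemma inv_sqrt2_bounds : 0.7071 <= / sqrt 2 <= 0.70711.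
Proof.
  pose proof sqrt2_bounds.
  split; apply (Rmult_le_reg_l (sqrt 2)); try lra; rewrite Rinv_r by lra; nra.
Qed.

Lemma inv_sqrt_vers_compl m d e : (d + e = m)%nat ->
  inv_sqrt_vers m e = inv_sqrt_vers m d.
Proof.
  intros Hm; destruct (Nat.eq_dec m 0) as [->|Hm0].
  - now replace d with 0%nat by lia; replace e with 0%nat by lia.
  - unfold inv_sqrt_vers; rewrite <- sin_PI_x; do 3 f_equal.
    rewrite <- Hm, plus_INR; field; rewrite <- plus_INR, Hm; apply not_0_INR, Hm0.
Qed.

Lemma inv_sqrt_vers_half m d : (d + d = m)%nat -> (0 < m)%nat ->
  inv_sqrt_vers m d = / sqrt 2.
Proof.
  intros Hm Hm0; unfold inv_sqrt_vers.
  replace (PI * INR d / INR m) with (PI / 2).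
  - rewrite sin_PI2; f_equal; ring.
  - rewrite <- Hm, plus_INR; field.
    assert (0 < INR d) by (apply lt_0_INR; lia); lra.
Qed.

Lemma vers_sum_split N m : (5 <= m)%nat ->
  vers_sum N m = 2 * (inv_sqrt_vers m 1 ^ N + inv_sqrt_vers m 2 ^ N)
                 + sum_range (fun d => inv_sqrt_vers m d ^ N) 3 (m - 5).
Proof.
  intros Hm; unfold vers_sum.
  replace (m - 1)%nat with (S (S (S (S (m - 5))))) by lia.
  rewrite !sum_range_peel.
  rewrite (inv_sqrt_vers_compl m 1 (1 + S (S (S (m - 5))))),
          (inv_sqrt_vers_compl m 2 (2 + S (m - 5))) by lia.
  ring.
Qed.

Lemma vers_sum_ge_first_two N m : (5 <= m)%nat ->
  2 * (inv_sqrt_vers m 1 ^ N + inv_sqrt_vers m 2 ^ N) <= vers_sum N m.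
Proof.
  intros Hm; rewrite vers_sum_split by exact Hm.
  enough (INR (m - 5) * 0 <= sum_range (fun d => inv_sqrt_vers m d ^ N) 3 (m - 5)) by lra.
  apply sum_range_lower_bound; intros d Hd.
  apply pow_le; left; apply inv_sqrt_vers_pos; lia.
Qed.

Lemma sin_ge_sin_PI4 x : PI / 4 <= x <= 3 * PI / 4 -> / sqrt 2 <= sin x.
Proof.
  intros Hx; pose proof PI_RGT_0.
  replace (/ sqrt 2) with (sin (PI / 4)) by (rewrite sin_PI4; field;
    apply Rgt_not_eq, sqrt_lt_R0; lra).
  destruct (Rle_dec x (PI / 2)).
  - apply sin_incr_1; lra.
  - rewrite <- (sin_PI_x x); apply sin_incr_1; lra.
Qed.

Lemma inv_sqrt_vers_le_1 m d : (m <= 4)%nat -> (1 <= d < m)%nat -> inv_sqrt_vers m d <= 1.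
Proof.
  intros Hm Hdm; pose proof PI_RGT_0.
  assert (Hd4 : INR m <= 4 * INR d /\ 4 * INR d <= 3 * INR m).
  { replace 4 with (INR 4) by (simpl; lra); replace 3 with (INR 3) by (simpl; lra).
    rewrite <- !mult_INR; split; apply le_INR; lia. }
  assert (0 < INR m) by (apply lt_0_INR; lia).
  assert (Hs : / sqrt 2 <= sin (PI * INR d / INR m)).
  { apply sin_ge_sin_PI4; split;
      [apply (Rmult_le_reg_r (4 * INR m)) | apply (Rmult_le_reg_r (4 * INR m))];
      try lra; field_simplify; nra. }
  pose proof sqrt2_bounds.
  assert (sqrt 2 * / sqrt 2 = 1) by (apply Rinv_r; lra).
  unfold inv_sqrt_vers; rewrite <- Rinv_1; apply Rinv_le_contravar; [lra | nra].
Qed.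

Lemma vers_sum_lt_small N m : (1 <= m <= 4)%nat -> vers_sum N m < INR m.
Proof.
  intros Hm; unfold vers_sum.
  apply Rle_lt_trans with (INR (m - 1) * 1).
  - apply sum_range_upper_bound; intros d Hd; rewrite <- (pow1 N); apply pow_incr.
    split; [left; apply inv_sqrt_vers_pos | apply inv_sqrt_vers_le_1]; lia.
  - rewrite Rmult_1_r; apply lt_INR; lia.
Qed.

Lemma inv_sqrt_vers_ge_inv_sqrt2 m d : (1 <= d < m)%nat -> / sqrt 2 <= inv_sqrt_vers m d.
Proof.
  intros Hdm; pose proof sqrt2_bounds; pose proof (sin_pi_frac_pos m d Hdm).
  assert (sin (PI * INR d / INR m) <= 1) by apply SIN_bound.
  apply Rinv_le_contravar; nra.
Qed.

Lemma inv_sqrt_vers_ge_linear m d : (1 <= d < m)%nat ->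
  INR m / (sqrt 2 * PI) / INR d <= inv_sqrt_vers m d.
Proof.
  intros Hdm; pose proof sqrt2_bounds; pose proof PI_RGT_0.
  assert (0 < INR d < INR m) by (split; [apply lt_0_INR | apply lt_INR]; lia).
  pose proof (sin_pi_frac_pos m d Hdm).
  assert (sin (PI * INR d / INR m) < PI * INR d / INR m)
    by (apply sin_lt_x, Rdiv_lt_0_compat; [apply Rmult_lt_0_compat|]; lra).
  replace (INR m / (sqrt 2 * PI) / INR d) with (/ (sqrt 2 * (PI * INR d / INR m)))
    by (field; repeat split; lra).
  apply Rinv_le_contravar; nra.
Qed.

Lemma vers_sum_gt_linear m : (10 <= m)%nat -> INR m < vers_sum 1 m.
Proof.
  intros Hm; rewrite vers_sum_split by lia; rewrite !pow_1.
  pose proof PI_bounds as Hpi; pose proof sqrt2_bounds as Hsqrt2.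
  pose proof inv_sqrt2_bounds as Hinv_sqrt2.
  assert (HM : 10 <= INR m) by (replace 10 with (INR 10) by (simpl; lra); apply le_INR, Hm).
  pose proof (inv_sqrt_vers_ge_linear m 1 ltac:(lia)) as Hv1.
  pose proof (inv_sqrt_vers_ge_linear m 2 ltac:(lia)) as Hv2.
  assert (Hmid : INR (m - 5) * / sqrt 2 <= sum_range (fun d => inv_sqrt_vers m d ^ 1) 3 (m - 5)).
  { apply sum_range_lower_bound; intros d Hd; rewrite pow_1.
    apply inv_sqrt_vers_ge_inv_sqrt2; lia. }
  rewrite minus_INR in Hmid by lia; simpl INR in Hv1, Hv2, Hmid.
  set (a := INR m / (sqrt 2 * PI)) in Hv1, Hv2.
  assert (Ha : a * (sqrt 2 * PI) = INR m) by (unfold a; field; lra).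
  assert (Hlen : 0 < sqrt 2 * PI < 4.44292) by (split; nra).
  assert (INR m < 4.44292 * a) by nra.
  assert ((INR m - 5) * / sqrt 2 >= 0.7071 * (INR m - 5)) by nra.
  lra.
Qed.

Lemma vers_sum_gt_quadratic N m : (2 <= N)%nat -> (9 <= m)%nat -> INR m < vers_sum N m.
Proof.
  intros HN Hm.
  eapply Rlt_le_trans; [|apply vers_sum_ge_first_two; lia].
  pose proof PI_bounds as Hpi; pose proof sqrt2_bounds as Hsqrt2.
  assert (HM : 9 <= INR m) by (replace 9 with (INR 9) by (simpl; lra); apply le_INR, Hm).
  pose proof (inv_sqrt_vers_ge_linear m 1 ltac:(lia)) as Hv1.
  pose proof (inv_sqrt_vers_ge_linear m 2 ltac:(lia)) as Hv2.
  simpl INR in Hv1, Hv2.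
  set (a := INR m / (sqrt 2 * PI)) in Hv1, Hv2.
  assert (Ha : a * (sqrt 2 * PI) = INR m) by (unfold a; field; lra).
  assert (Hlen : 0 < sqrt 2 * PI < 4.44292) by (split; nra).
  assert (INR m < 4.44292 * a) by nra.
  assert (Hpow1 : a ^ 2 <= inv_sqrt_vers m 1 ^ N).
  { apply Rle_trans with (inv_sqrt_vers m 1 ^ 2); [apply pow_incr | apply Rle_pow]; (lra || lia). }
  assert (Hpow2 : (a / 2) ^ 2 <= inv_sqrt_vers m 2 ^ N).
  { apply Rle_trans with (inv_sqrt_vers m 2 ^ 2); [apply pow_incr | apply Rle_pow]; (lra || lia). }
  simpl in Hpow1, Hpow2; nra.
Qed.

(** * Enclosures for 5 <= m <= 9 *)

Lemma sin_lb_eq a : sin_lb a = a - a ^ 3 / 6 + a ^ 5 / 120 - a ^ 7 / 5040.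
Proof.
  unfold sin_lb, sin_approx, sin_term; cbn [sum_f_R0 Nat.mul Nat.add].
  rewrite !fact_simpl, !mult_INR; simpl; field.
Qed.

Lemma sin_ub_eq a :
  sin_ub a = a - a ^ 3 / 6 + a ^ 5 / 120 - a ^ 7 / 5040 + a ^ 9 / 362880.
Proof.
  unfold sin_ub, sin_approx, sin_term; cbn [sum_f_R0 Nat.mul Nat.add].
  rewrite !fact_simpl, !mult_INR; simpl; field.
Qed.

Lemma sin_pi_mul_bounds x : 0 <= x -> 3.1416 * x <= 1.57 ->
  sin_lb (3.14159 * x) <= sin (PI * x) <= sin_ub (3.1416 * x).
Proof.
  intros Hx Hx1; pose proof PI_bounds as Hpi; split.
  - apply Rle_trans with (sin (3.14159 * x)); [apply SIN | apply sin_incr_1]; nra.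
  - apply Rle_trans with (sin (3.1416 * x)); [apply sin_incr_1 | apply SIN]; nra.
Qed.

Lemma inv_sqrt_vers_enclosure m d x lo hi : (1 <= d < m)%nat -> x * INR m = INR d ->
  3.1416 * x <= 1.57 -> 0 < lo <= hi ->
  lo * 1.41422 * sin_ub (3.1416 * x) <= 1 ->
  1 <= hi * 1.41421 * sin_lb (3.14159 * x) ->
  lo <= inv_sqrt_vers m d <= hi.
Proof.
  intros Hdm Hx Hx1 Hlohi Hlo Hhi; pose proof sqrt2_bounds as Hsqrt2.
  assert (0 < INR d < INR m) by (split; [apply lt_0_INR | apply lt_INR]; lia).
  assert (Hangle : PI * INR d / INR m = PI * x) by (rewrite <- Hx; field; lra).
  pose proof (sin_pi_frac_pos m d Hdm) as Hpos; rewrite Hangle in Hpos.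
  destruct (sin_pi_mul_bounds x) as [Hsl Hsu]; [nra | lra |].
  unfold inv_sqrt_vers; rewrite Hangle.
  set (s := sin (PI * x)) in *.
  assert (Hroot : 0 < sqrt 2 * s) by nra.
  split.
  - apply (Rmult_le_reg_r (sqrt 2 * s)); [exact Hroot|].
    rewrite Rinv_l by lra; nra.
  - assert (1.41421 * sin_lb (3.14159 * x) <= sqrt 2 * s)
      by (destruct (Rle_dec (sin_lb (3.14159 * x)) 0); nra).
    apply (Rmult_le_reg_r (sqrt 2 * s)); [exact Hroot|].
    rewrite Rinv_l by lra; nra.
Qed.

Ltac enclose x :=
  apply (inv_sqrt_vers_enclosure _ _ x);
  [lia | simpl; lra | lra | lra | rewrite sin_ub_eq; lra | rewrite sin_lb_eq; lra].

Lemma inv_sqrt_vers_5_1 : 1.2029 <= inv_sqrt_vers 5 1 <= 1.2031. Proof. enclose (1/5). Qed.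
Lemma inv_sqrt_vers_5_2 : 0.7434 <= inv_sqrt_vers 5 2 <= 0.7436. Proof. enclose (2/5). Qed.
Lemma inv_sqrt_vers_6_1 : 1.4142 <= inv_sqrt_vers 6 1 <= 1.4143. Proof. enclose (1/6). Qed.
Lemma inv_sqrt_vers_6_2 : 0.8164 <= inv_sqrt_vers 6 2 <= 0.8166. Proof. enclose (2/6). Qed.
Lemma inv_sqrt_vers_7_1 : 1.6297 <= inv_sqrt_vers 7 1 <= 1.6298. Proof. enclose (1/7). Qed.
Lemma inv_sqrt_vers_7_2 : 0.9044 <= inv_sqrt_vers 7 2 <= 0.9045. Proof. enclose (2/7). Qed.
Lemma inv_sqrt_vers_7_3 : 0.7252 <= inv_sqrt_vers 7 3 <= 0.7254. Proof. enclose (3/7). Qed.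
Lemma inv_sqrt_vers_8_1 : 1.8477 <= inv_sqrt_vers 8 1 <= 1.8478. Proof. enclose (1/8). Qed.
Lemma inv_sqrt_vers_8_2 : 0.9999 <= inv_sqrt_vers 8 2 <= 1.0001. Proof. enclose (2/8). Qed.
Lemma inv_sqrt_vers_8_3 : 0.7653 <= inv_sqrt_vers 8 3 <= 0.7654. Proof. enclose (3/8). Qed.
Lemma inv_sqrt_vers_9_1 : 2.0674 <= inv_sqrt_vers 9 1 <= 2.0675. Proof. enclose (1/9). Qed.
Lemma inv_sqrt_vers_9_2 : 1.1 <= inv_sqrt_vers 9 2 <= 1.1001. Proof. enclose (2/9). Qed.
Lemma inv_sqrt_vers_9_3 : 0.8164 <= inv_sqrt_vers 9 3 <= 0.8166. Proof. enclose (3/9). Qed.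
Lemma inv_sqrt_vers_9_4 : 0.718 <= inv_sqrt_vers 9 4 <= 0.7181. Proof. enclose (4/9). Qed.

Lemma vers_sum_gt_of_first N m k lo : (5 <= m)%nat -> (k <= N)%nat ->
  1 <= lo <= inv_sqrt_vers m 1 -> INR m < 2 * lo ^ k -> INR m < vers_sum N m.
Proof.
  intros Hm HkN Hlo Hgt; pose proof (vers_sum_ge_first_two N m Hm).
  assert (0 <= inv_sqrt_vers m 2 ^ N) by (apply pow_le; left; apply inv_sqrt_vers_pos; lia).
  assert (lo ^ k <= inv_sqrt_vers m 1 ^ k) by (apply pow_incr; lra).
  assert (inv_sqrt_vers m 1 ^ k <= inv_sqrt_vers m 1 ^ N) by (apply Rle_pow; (lra || lia)).
  lra.
Qed.

Lemma pow_enclosure lo x hi k : lo <= x <= hi -> 0 <= lo -> lo ^ k <= x ^ k <= hi ^ k.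
Proof. intros Hx Hlo; split; apply pow_incr; lra. Qed.

Ltac raise_enclosures :=
  repeat match goal with
  | H : ?lo <= ?x <= ?hi |- context [?x ^ ?k] =>
      apply (pow_enclosure lo x hi k) in H; [|lra]
  | H : ?lo <= ?x <= ?hi, _ : context [?x ^ ?k] |- _ =>
      apply (pow_enclosure lo x hi k) in H; [|lra]
  end.

Lemma vers_sum_5 N : vers_sum N 5 = 2 * (inv_sqrt_vers 5 1 ^ N + inv_sqrt_vers 5 2 ^ N).
Proof.
  unfold vers_sum; simpl.
  rewrite (inv_sqrt_vers_compl 5 1 4), (inv_sqrt_vers_compl 5 2 3) by lia; ring.
Qed.

Lemma vers_sum_6 N : vers_sum N 6 =
  2 * (inv_sqrt_vers 6 1 ^ N + inv_sqrt_vers 6 2 ^ N) + (/ sqrt 2) ^ N.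
Proof.
  unfold vers_sum; simpl.
  rewrite (inv_sqrt_vers_compl 6 1 5), (inv_sqrt_vers_compl 6 2 4),
          (inv_sqrt_vers_half 6 3) by lia; ring.
Qed.

Lemma vers_sum_7 N : vers_sum N 7 =
  2 * (inv_sqrt_vers 7 1 ^ N + inv_sqrt_vers 7 2 ^ N + inv_sqrt_vers 7 3 ^ N).
Proof.
  unfold vers_sum; simpl.
  rewrite (inv_sqrt_vers_compl 7 1 6), (inv_sqrt_vers_compl 7 2 5),
          (inv_sqrt_vers_compl 7 3 4) by lia; ring.
Qed.

Lemma vers_sum_8 N : vers_sum N 8 =
  2 * (inv_sqrt_vers 8 1 ^ N + inv_sqrt_vers 8 2 ^ N + inv_sqrt_vers 8 3 ^ N)
  + (/ sqrt 2) ^ N.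
Proof.
  unfold vers_sum; simpl.
  rewrite (inv_sqrt_vers_compl 8 1 7), (inv_sqrt_vers_compl 8 2 6),
          (inv_sqrt_vers_compl 8 3 5), (inv_sqrt_vers_half 8 4) by lia; ring.
Qed.

Lemma vers_sum_9 N : vers_sum N 9 = 2 * (inv_sqrt_vers 9 1 ^ N + inv_sqrt_vers 9 2 ^ N
                                         + inv_sqrt_vers 9 3 ^ N + inv_sqrt_vers 9 4 ^ N).
Proof.
  unfold vers_sum; simpl.
  rewrite (inv_sqrt_vers_compl 9 1 8), (inv_sqrt_vers_compl 9 2 7),
          (inv_sqrt_vers_compl 9 3 6), (inv_sqrt_vers_compl 9 4 5) by lia; ring.
Qed.

Lemma vers_sum_5_gt_iff N : (1 <= N)%nat -> INR 5 < vers_sum N 5 <-> (5 <= N)%nat.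
Proof.
  intros HN; pose proof inv_sqrt_vers_5_1 as Hv1; pose proof inv_sqrt_vers_5_2 as Hv2.
  split; intros Hgt.
  - rewrite vers_sum_5 in Hgt.
    destruct N as [|[|[|[|[|N]]]]]; try lia; raise_enclosures; simpl INR in Hgt; lra.
  - apply (vers_sum_gt_of_first N 5 5 1.2029); first [lia | simpl; lra].
Qed.

Lemma vers_sum_6_gt_iff N : (1 <= N)%nat -> INR 6 < vers_sum N 6 <-> (3 <= N)%nat.
Proof.
  intros HN; pose proof inv_sqrt_vers_6_1 as Hv1; pose proof inv_sqrt_vers_6_2 as Hv2.
  pose proof inv_sqrt2_bounds as Hv3.
  split; intros Hgt.
  - rewrite vers_sum_6 in Hgt.
    destruct N as [|[|[|N]]]; try lia; raise_enclosures; simpl INR in Hgt; lra.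
  - destruct (Nat.eq_dec N 3) as [->|HN3].
    + rewrite vers_sum_6; raise_enclosures; simpl INR; lra.
    + apply (vers_sum_gt_of_first N 6 4 1.4142); first [lia | simpl; lra].
Qed.

Lemma vers_sum_7_gt_iff N : (1 <= N)%nat -> INR 7 < vers_sum N 7 <-> (2 <= N)%nat.
Proof.
  intros HN; pose proof inv_sqrt_vers_7_1 as Hv1; pose proof inv_sqrt_vers_7_2 as Hv2.
  pose proof inv_sqrt_vers_7_3 as Hv3.
  split; intros Hgt.
  - rewrite vers_sum_7 in Hgt.
    destruct N as [|[|N]]; try lia; raise_enclosures; simpl INR in Hgt; lra.
  - destruct (Nat.eq_dec N 2) as [->|HN2].
    + rewrite vers_sum_7; raise_enclosures; simpl INR; lra.
    + apply (vers_sum_gt_of_first N 7 3 1.6297); first [lia | simpl; lra].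
Qed.

Lemma vers_sum_8_gt_iff N : (1 <= N)%nat -> INR 8 < vers_sum N 8 <-> (2 <= N)%nat.
Proof.
  intros HN; pose proof inv_sqrt_vers_8_1 as Hv1; pose proof inv_sqrt_vers_8_2 as Hv2.
  pose proof inv_sqrt_vers_8_3 as Hv3; pose proof inv_sqrt2_bounds as Hv4.
  split; intros Hgt.
  - rewrite vers_sum_8 in Hgt.
    destruct N as [|[|N]]; try lia; raise_enclosures; simpl INR in Hgt; lra.
  - destruct (Nat.eq_dec N 2) as [->|HN2].
    + rewrite vers_sum_8; raise_enclosures; simpl INR; lra.
    + apply (vers_sum_gt_of_first N 8 3 1.8477); first [lia | simpl; lra].
Qed.

Lemma vers_sum_9_gt : INR 9 < vers_sum 1 9.
Proof.
  rewrite vers_sum_9, !pow_1.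
  pose proof inv_sqrt_vers_9_1; pose proof inv_sqrt_vers_9_2.
  pose proof inv_sqrt_vers_9_3; pose proof inv_sqrt_vers_9_4.
  simpl INR; lra.
Qed.

Lemma vers_sum_gt_iff N m : (1 <= N)%nat -> (1 <= m)%nat ->
  INR m < vers_sum N m <-> (m_n (N + 2) <= m)%nat.
Proof.
  intros HN Hm; rewrite Nat.add_comm.
  assert (Hm_n : (5 <= m_n (2 + N) <= 9)%nat)
    by (destruct N as [|[|[|[|[|N]]]]]; simpl; lia).
  destruct (Compare_dec.le_lt_dec 10 m) as [Hm10 | Hm10].
  { split; [lia | intros _].
    destruct (Nat.eq_dec N 1) as [->|HN1];
      [now apply vers_sum_gt_linear | apply vers_sum_gt_quadratic; lia]. }
  destruct (Compare_dec.le_lt_dec m 4) as [Hm4 | Hm4].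
  { pose proof (vers_sum_lt_small N m ltac:(lia)); split; [lra | lia]. }
  destruct m as [|[|[|[|[|[|[|[|[|[|m]]]]]]]]]]; try lia.
  - rewrite vers_sum_5_gt_iff by exact HN; destruct N as [|[|[|[|[|N]]]]]; simpl; lia.
  - rewrite vers_sum_6_gt_iff by exact HN; destruct N as [|[|[|[|[|N]]]]]; simpl; lia.
  - rewrite vers_sum_7_gt_iff by exact HN; destruct N as [|[|[|[|[|N]]]]]; simpl; lia.
  - rewrite vers_sum_8_gt_iff by exact HN; destruct N as [|[|[|[|[|N]]]]]; simpl; lia.
  - split; [lia | intros _].
    destruct (Nat.eq_dec N 1) as [->|HN1];
      [apply vers_sum_9_gt | apply vers_sum_gt_quadratic; lia].
Qed.

Theorem lemma4p1 (n m : nat) (hn : (3 <= n)%nat) (hm : (1 <= m)%nat) :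
  mu_p n m - muhat_p n m > 0 <-> (m_n n <= m)%nat.
Proof.
  rewrite mu_p_eq, muhat_p_eq by lia.
  replace (m_n n) with (m_n (n - 2 + 2)) by (f_equal; lia).
  rewrite <- vers_sum_gt_iff by lia.
  assert (Hm : 0 < INR m) by (apply lt_0_INR; lia).
  split; intros Hgt.
  - apply (Rmult_lt_reg_l (INR m)); lra.
  - nra.
Qed.
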